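(* Let $\mathbf C$ be an admissible category of lattices, $X$ a convergence space, and $L$ a convergence $\mathbf C$-object. For every morphism $\varphi:L\to\mathbb P(X)$ in $\mathbf C^{\mathrm{conv}}$ there is a unique map $\varphi^\dagger:X\to\mathrm{pt}\,L$ such that $(\varphi^\dagger)^{-1}(\ell^\bullet)=\varphi(\ell)$ for every $\ell\in L$, and this map is continuous.
   Context: A filter on an inf-semilattice $L$ is a non-empty upward-closed subset closed under binary meets ($L$ itself allowed); $\mathbb F L$ is the set of filters. A category of lattices has lattices as objects and morphisms preserving finite suprema and infima; it is admissible if every powerset $\mathbb P(X)$ is an object and there are classes of index sets $\mathcal I,\mathcal J$ such that morphisms $L\to L'$ are exactly the monotone maps preserving all existing $I$-indexed infima ($I\in\mathcal I$) and $J$-indexed suprema ($J\in\mathcal J$). A convergence $\mathbf C$-object is $(L,\lim_L)$ with $L$ a $\mathbf C$-object and $\lim_L:\mathbb F L\to L$ monotone; morphisms $\varphi:L\to L'$ of $\mathbf C^{\mathrm{conv}}$ are $\mathbf C$-morphisms with $\lim_{L'}\mathcal F\le\varphi(\lim_L\varphi^{-1}(\mathcal F))$ for all $\mathcal F\in\mathbb F L'$. A convergence space is a set $X$ with a relation $\to$ between filters of subsets of $X$ and points with $\{S:x\in S\}\to x$ and $\mathcal F\to x,\mathcal F\subseteq\mathcal G\Rightarrow\mathcal G\to x$; $f:X\to Y$ is continuous if $\mathcal F\to x$ implies $f[\mathcal F]\to f(x)$, $f[\mathcal F]=\{B:f^{-1}(B)\in\mathcal F\}$. $\mathbb P(X)$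 is the powerset with $\lim\mathcal F=\{x:\mathcal F\to x\}$. With $\mathbb P(1)=\{\emptyset,\{*\}\}$ and $\lim_{\mathbb P(1)}$ constantly $\{*\}$, $\mathrm{pt}\,L$ is the set of $\mathbf C^{\mathrm{conv}}$-morphisms $L\to\mathbb P(1)$, $\ell^\bullet=\{\psi\in\mathrm{pt}\,L:\psi(\ell)=\{*\}\}$, and $\mathrm{pt}\,L$ is a convergence space with $\mathcal F\to\psi$ iff $\psi\in(\lim_L\{\ell:\ell^\bullet\in\mathcal F\})^\bullet$. *)

From mathcomp Require Import all_boot.
From mathcomp Require Import boolp classical_sets.
Set Implicit Arguments.
Unset Strict Implicit.
Unset Printing Implicit Defensive.
Local Open Scope classical_set_scope.

Definition is_inf (T : Type) (le : T -> T -> Prop) (I : Type) (f : I -> T) (m : T) :=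
  (forall i, le m (f i)) /\ (forall z, (forall i, le z (f i)) -> le z m).
Definition is_sup (T : Type) (le : T -> T -> Prop) (I : Type) (f : I -> T) (m : T) :=
  (forall i, le (f i) m) /\ (forall z, (forall i, le (f i) z) -> le m z).

Record Lattice := Lat {
  car :> Type;
  le : car -> car -> Prop;
  le_refl : forall x, le x x;
  le_trans : forall x y z, le x y -> le y z -> le x z;
  le_anti : forall x y, le x y -> le y x -> x = y;
  fin_inf : forall n (f : 'I_n -> car), exists m, is_inf le f m;
  fin_sup : forall n (f : 'I_n -> car), exists m, is_sup le f m }.

Lemma pow_anti (X : Type) (A B : set X) : A `<=` B -> B `<=` A -> A = B.
Proof. by move=> h1 h2; apply/seteqP; split. Qed.

Lemma pow_inf (X : Type) n (f : 'I_n -> set X) :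
  exists m, is_inf (@subset X) f m.
Proof.
exists [set x | forall i, f i x]; split; first by move=> i x /(_ i).
by move=> z hz x zx i; apply: hz.
Qed.

Lemma pow_sup (X : Type) n (f : 'I_n -> set X) :
  exists m, is_sup (@subset X) f m.
Proof.
exists [set x | exists i, f i x]; split; first by move=> i x fx; exists i.
by move=> z hz x [i fx]; exact: hz fx.
Qed.

Definition powlat (X : Type) : Lattice :=
  @Lat (set X) (@subset X) (@subset_refl X) (fun A B C h1 h2 => subset_trans h1 h2)
    (@pow_anti X) (@pow_inf X) (@pow_sup X).

(** * Filters on an inf-semilattice (the whole lattice is allowed) *)
Definition isFilter (L : Lattice) (F : set L) : Prop :=
  (exists a, F a) /\
  (forall a b, F a -> le a b -> F b) /\
  (forall a b m, F a -> F b ->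
     is_inf (@le L) (fun i : bool => if i then a else b) m -> F m).

Definition monotone (A B : Lattice) (phi : A -> B) :=
  forall x y, le x y -> le (phi x) (phi y).
Definition pres_inf (A B : Lattice) (I : Type) (phi : A -> B) :=
  forall (f : I -> A) m, is_inf (@le A) f m -> is_inf (@le B) (phi \o f) (phi m).
Definition pres_sup (A B : Lattice) (I : Type) (phi : A -> B) :=
  forall (f : I -> A) m, is_sup (@le A) f m -> is_sup (@le B) (phi \o f) (phi m).

Definition Hom (IC JC : Type -> Prop) (A B : Lattice) (phi : A -> B) :=
  monotone phi /\
  (forall I, IC I -> pres_inf I phi) /\
  (forall J, JC J -> pres_sup J phi).

Definition admissible (Obj : Lattice -> Prop) (IC JC : Type -> Prop) :=
  (forall (A B : Lattice) (phi : A -> B), Obj A -> Obj B -> Hom IC JC phi ->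
     forall n, pres_inf 'I_n phi /\ pres_sup 'I_n phi) /\
  (forall X : Type, Obj (powlat X)).

(** * Convergence C-objects: lim is given as a function on subsets of L; only
    its values on filters matter (monotone on the poset of filters). *)
Record convObj := ConvObj {
  clat :> Lattice;
  lim : set clat -> clat;
  lim_mono : forall F G : set clat, isFilter F -> isFilter G -> F `<=` G ->
    le (lim F) (lim G) }.

Definition convHom (IC JC : Type -> Prop) (L L' : convObj) (phi : L -> L') :=
  Hom IC JC phi /\
  forall F : set L', isFilter F -> le (lim F) (phi (lim (phi @^-1` F))).

Definition setFilter (X : Type) (F : set (set X)) : Prop :=
  (exists A, F A) /\
  (forall A B, F A -> A `<=` B -> F B) /\
  (forall A B, F A -> F B -> F (A `&` B)).

Definition principal (X : Type) (x : X) : set (set X) := [set S | S x].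

Record convSpace := ConvSpace {
  pts :> Type;
  conv : set (set pts) -> pts -> Prop;
  conv_point : forall x, conv (principal x) x;
  conv_up : forall (F G : set (set pts)) x, setFilter F -> setFilter G ->
    F `<=` G -> conv F x -> conv G x }.

Definition imfilter (X Y : Type) (f : X -> Y) (F : set (set X)) : set (set Y) :=
  [set B | F (f @^-1` B)].

Definition continuous_map (X Y : Type) (cX : set (set X) -> X -> Prop)
  (cY : set (set Y) -> Y -> Prop) (f : X -> Y) :=
  forall F x, setFilter F -> cX F x -> cY (imfilter f F) (f x).

Lemma filter_setFilter (X : Type) (F : set (set X)) :
  @isFilter (powlat X) F -> setFilter F.
Proof.
move=> [ne [up cl]]; split=> //; split=> // A B FA FB.
apply: (cl A B) => //; split; first by case=> x [].
by move=> z hz x zx; split; [exact: (hz true) | exact: (hz false)].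
Qed.

Lemma powconv_mono (X : convSpace) (F G : set (set X)) :
  @isFilter (powlat X) F -> @isFilter (powlat X) G -> F `<=` G ->
  @le (powlat X) [set x | conv F x] [set x | conv G x].
Proof.
move=> hF hG FG x /= Fx.
exact: (conv_up (filter_setFilter hF) (filter_setFilter hG) FG Fx).
Qed.

Definition powconv (X : convSpace) : convObj :=
  @ConvObj (powlat X) (fun F => [set x | conv F x]) (@powconv_mono X).

Lemma p1_mono (F G : set (powlat unit)) :
  isFilter F -> isFilter G -> F `<=` G -> @le (powlat unit) [set tt] [set tt].
Proof. by move=> *; exact: subset_refl. Qed.

Definition P1 : convObj := @ConvObj (powlat unit) (fun _ => [set tt]) p1_mono.

Definition pt (IC JC : Type -> Prop) (L : convObj) :=
  {psi : L -> set unit | convHom IC JC (L := L) (L' := P1) psi}.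

Definition bullet (IC JC : Type -> Prop) (L : convObj) (l : L) : set (pt IC JC L) :=
  [set psi | proj1_sig psi l = [set tt]].

Definition conv_pt (IC JC : Type -> Prop) (L : convObj)
  (F : set (set (pt IC JC L))) (psi : pt IC JC L) : Prop :=
  @bullet IC JC L (lim [set l | F (@bullet IC JC L l)]) psi.

From mathcomp Require Import all_boot.
From mathcomp Require Import boolp classical_sets.

(* Evaluation at a point x is a morphism P(X) -> P(1) of convergence objects:
   it preserves all infima and suprema, and the filter of sets whose evaluation
   is {*} contains the principal filter of x, which converges to x.  Composing
   phi with the evaluation at x therefore gives a point phi^dagger(x) of L,
   which lies in l^bullet exactly when x lies in phi(l).  A point is determined
   by the l^bullet containing it, whence uniqueness, and continuity is the
   convergence condition on phi read at the point x. *)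

Local Open Scope classical_set_scope.

Lemma set_unit_eq_tt (A : set unit) : A = [set tt] <-> A tt.
Proof. by split=> [-> // | Att]; apply/seteqP; split=> -[]. Qed.

Lemma principal_setFilter {X : Type} (x : X) : setFilter (principal x).
Proof. by split; [exists setT | split=> [A B Ax /(_ x Ax) | A B]]. Qed.

Lemma setFilter_isFilter {X : Type} {F : set (set X)} :
  setFilter F -> @isFilter (powlat X) F.
Proof.
move=> [ne [up cl]]; split=> //; split=> // A B M FA FB [_ glbM].
apply: up (cl A B FA FB) _.
by apply: glbM => -[] x [].
Qed.

Lemma isFilter_preimage {A B : Lattice} {f : A -> B} {F : set B} :
  monotone f -> pres_inf bool f -> pres_inf 'I_0 f ->
  isFilter F -> isFilter (f @^-1` F).
Proof.
move=> f_mono f_inf2 f_inf0 [[b Fb] [up cl]].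
have [top top_inf] := fin_inf (ffun0 (card_ord 0) : 'I_0 -> A).
split.
  exists top; apply: up Fb _.
  by apply: (proj2 (f_inf0 _ _ top_inf)) => -[].
split; first by move=> a a' Fa aa'; exact: up Fa (f_mono _ _ aa').
move=> a a' m Fa Fa' m_inf; apply: cl Fa Fa' _.
by have := f_inf2 _ _ m_inf; congr is_inf; apply: funext => -[].
Qed.

Section Morphisms.
Context {IC JC : Type -> Prop}.

Lemma Hom_comp {A B C : Lattice} {f : A -> B} {g : B -> C} :
  Hom IC JC f -> Hom IC JC g -> Hom IC JC (g \o f).
Proof.
move=> [f_mono [f_inf f_sup]] [g_mono [g_inf g_sup]]; split.
  by move=> x y xy; apply/g_mono/f_mono.
split=> [I hI h m m_inf | J hJ h m m_sup].
  exact/(g_inf I hI)/(f_inf I hI).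
exact/(g_sup J hJ)/(f_sup J hJ).
Qed.

Lemma convHom_comp {L L' L'' : convObj} {f : L -> L'} {g : L' -> L''} :
  convHom IC JC f -> convHom IC JC g ->
  pres_inf bool g -> pres_inf 'I_0 g -> convHom IC JC (g \o f).
Proof.
move=> [f_hom f_lim] [g_hom g_lim] g_inf2 g_inf0; split.
  exact: Hom_comp.
move=> F F_filter; apply: le_trans (g_lim F F_filter) _.
apply: (proj1 g_hom); apply: f_lim.
exact: isFilter_preimage (proj1 g_hom) g_inf2 g_inf0 F_filter.
Qed.

End Morphisms.

Definition eval_at {X : Type} (x : X) (A : set X) : set unit := [set _ | A x].

Section Evaluation.
Context {X : Type}.
Implicit Types x : X.

Lemma eval_at_monotone x : @monotone (powlat X) (powlat unit) (eval_at x).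
Proof. by move=> A B AB u; exact: AB. Qed.

Lemma eval_at_pres_inf (I : Type) x :
  @pres_inf (powlat X) (powlat unit) I (eval_at x).
Proof.
move=> g M [lbM glbM]; split=> [i u | U lbU [] Utt]; first exact: lbM.
by apply: (glbM [set x]) => // i y ->; exact: lbU Utt.
Qed.

(* If x were in M but not in an upper bound U, then M minus x would be a
   smaller upper bound of the family. *)
Lemma eval_at_pres_sup (I : Type) x :
  @pres_sup (powlat X) (powlat unit) I (eval_at x).
Proof.
move=> g M [ubM lubM]; split=> [i u | U ubU [] Mx]; first exact: ubM.
apply: contrapT => Untt.
have /(_ x Mx) [] // : M `<=` [set y | M y /\ y <> x].
apply: lubM => i y giy; split; first exact: ubM giy.
by move=> yx; apply: Untt; apply: (ubU i); rewrite /= -yx.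
Qed.

Lemma eval_at_Hom (IC JC : Type -> Prop) x :
  @Hom IC JC (powlat X) (powlat unit) (eval_at x).
Proof.
split; first exact: eval_at_monotone.
by split=> ? _; [exact: eval_at_pres_inf | exact: eval_at_pres_sup].
Qed.

End Evaluation.

Lemma eval_at_convHom (IC JC : Type -> Prop) {X : convSpace} (x : X) :
  convHom IC JC (L := powconv X) (L' := P1) (eval_at x).
Proof.
split; first exact: eval_at_Hom.
move=> F F_filter [] _ /=.
have G_filter : @isFilter (powlat X) (eval_at x @^-1` F).
  by apply: isFilter_preimage F_filter;
    [exact: eval_at_monotone | exact (eval_at_pres_inf _ x) ..].
apply: conv_up (principal_setFilter x) (filter_setFilter G_filter) _
  (conv_point x).
move=> A Ax; rewrite /= (proj2 (set_unit_eq_tt (eval_at x A)) Ax).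
by case: F_filter => -[a Fa] [up _]; apply: up Fa _ => -[].
Qed.

Section Points.
Context {IC JC : Type -> Prop} {L : convObj}.

Lemma pt_ext (psi psi' : pt IC JC L) :
  (forall l, bullet l psi <-> bullet l psi') -> psi = psi'.
Proof.
case: psi psi' => [psi ?] [psi' ?] same_bullets; apply: eq_exist.
apply: funext => l; apply/seteqP; split=> -[].
  by rewrite -!set_unit_eq_tt; apply: (same_bullets l).1.
by rewrite -!set_unit_eq_tt; apply: (same_bullets l).2.
Qed.

Lemma pt_map_eq {X : Type} (f g : X -> pt IC JC L) :
  (forall l, f @^-1` bullet l = g @^-1` bullet l) -> f = g.
Proof.
move=> same_preimages; apply: funext => x; apply: pt_ext => l.
by rewrite -[bullet l (f x)]/((f @^-1` bullet l) x) same_preimages.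
Qed.

Context {X : convSpace} {phi : L -> set X}.
Hypothesis hphi : convHom IC JC (L := L) (L' := powconv X) phi.

Definition pt_of_eval (x : X) : pt IC JC L :=
  exist _ (eval_at x \o phi)
    (convHom_comp hphi (eval_at_convHom IC JC x)
       (eval_at_pres_inf _ x) (eval_at_pres_inf _ x)).

Lemma preimage_bullet_pt_of_eval (l : L) : pt_of_eval @^-1` bullet l = phi l.
Proof. by apply/seteqP; split=> x; rewrite /= /bullet /= set_unit_eq_tt. Qed.

Lemma continuous_pt_map (f : X -> pt IC JC L) :
  (forall l, f @^-1` bullet l = phi l) ->
  continuous_map (@conv X) (@conv_pt IC JC L) f.
Proof.
move=> f_bullet F x F_filter Fx.
rewrite /conv_pt -[bullet _ (f x)]/((f @^-1` bullet _) x) f_bullet.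
have -> : [set l | imfilter f F (bullet l)] = phi @^-1` F.
  by apply/seteqP; split=> l; rewrite /imfilter /= f_bullet.
exact: (proj2 hphi F (setFilter_isFilter F_filter) x Fx).
Qed.

End Points.

Theorem mainTheorem4 (Obj : Lattice -> Prop) (IC JC : Type -> Prop)
  (hC : admissible Obj IC JC) (X : convSpace) (L : convObj) (hL : Obj L)
  (phi : L -> set X) (hphi : convHom IC JC (L := L) (L' := powconv X) phi) :
  exists phid : X -> pt IC JC L,
    ((forall l : L, phid @^-1` @bullet IC JC L l = phi l) /\
     continuous_map (@conv X) (@conv_pt IC JC L) phid) /\
    (forall g : X -> pt IC JC L,
       (forall l : L, g @^-1` @bullet IC JC L l = phi l) -> g = phid).
Proof.
have phid_bullet := preimage_bullet_pt_of_eval hphi.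
exists (pt_of_eval hphi); split; first split.
- exact: phid_bullet.
- exact: continuous_pt_map hphi _ phid_bullet.
- by move=> g g_bullet; apply: pt_map_eq => l; rewrite g_bullet phid_bullet.
Qed.
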